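(* Let $(\mu_0^3,\cdot,[-,-])$ be a transposed Poisson algebra structure on the associative algebra $\mu_0^3$. Then it is isomorphic to one of the following pairwise non-isomorphic algebras: $\mathbf{TP}(1,0)$, or $\mathbf{TP}(0,\alpha)$ with $\alpha\in\mathbb{C}$.
   Context: $\mu_0^3$ is the complex commutative associative algebra with basis $\{e_1,e_2,e_3\}$ and $e_1\cdot e_1=e_2$, $e_1\cdot e_2=e_2\cdot e_1=e_3$, other products zero. A transposed Poisson algebra is a triple $(\mathfrak{L},\cdot,[-,-])$ with $(\mathfrak{L},\cdot)$ commutative associative, $(\mathfrak{L},[-,-])$ a Lie algebra, and $2z\cdot[x,y]=[z\cdot x,y]+[x,z\cdot y]$ for all $x,y,z$. For $\alpha_2,\alpha_3\in\mathbb{C}$, $\mathbf{TP}(\alpha_2,\alpha_3)$ denotes $\mu_0^3$ with the bracket $[e_i,e_j]=(j-i)\sum_{t=i+j-1}^{3}\alpha_{t-i-j+3}e_t$ for $3\leq i+j\leq 4$, all other brackets of basis elements zero. Isomorphisms preserve both operations. *)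

(* The complex field C is modelled as R[i] = complex R for an
   arbitrary R : realType (the real numbers); the 3-dim space is 'rV[C]_3,
   basis e_1,e_2,e_3 = delta rows 0,1,2. *)
From HB Require Import structures.
From mathcomp Require Import all_boot all_order all_algebra.
From mathcomp Require Import complex.
From mathcomp Require Import reals.
Set Implicit Arguments. Unset Strict Implicit. Unset Printing Implicit Defensive.
Import Order.TTheory GRing.Theory Num.Theory.
Local Open Scope ring_scope.

Section Defs.
Variable C : fieldType.
Notation V := 'rV[C]_3.

Definition e1 : V := delta_mx 0 (@Ordinal 3 0 isT).
Definition e2 : V := delta_mx 0 (@Ordinal 3 1 isT).
Definition e3 : V := delta_mx 0 (@Ordinal 3 2 isT).
Definition co (x : V) (k : nat) (Hk : (k < 3)%N) : C := x 0 (Ordinal Hk).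
Definition x1 (x : V) := co x (isT : (0 < 3)%N).
Definition x2 (x : V) := co x (isT : (1 < 3)%N).
Definition x3 (x : V) := co x (isT : (2 < 3)%N).

(* product of mu_0^3, extended bilinearly from e1e1=e2, e1e2=e2e1=e3 *)
Definition mu (x y : V) : V :=
  (x1 x * x1 y) *: e2 + (x1 x * x2 y + x2 x * x1 y) *: e3.

(* bracket of TP(a2,a3): [e1,e2] = a2 e2 + a3 e3, [e1,e3] = 2 a2 e3,
   [e_j,e_i] = -[e_i,e_j], all others zero. *)
Definition TPbr (a2 a3 : C) (x y : V) : V :=
  (x1 x * x2 y - x2 x * x1 y) *: (a2 *: e2 + a3 *: e3)
  + (x1 x * x3 y - x3 x * x1 y) *: ((2%:R * a2) *: e3).

Definition is_bilinear (br : V -> V -> V) : Prop :=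
  (forall (a : C) x y z, br (a *: x + y) z = a *: br x z + br y z) /\
  (forall (a : C) x y z, br z (a *: x + y) = a *: br z x + br z y).

Definition is_Lie (br : V -> V -> V) : Prop :=
  is_bilinear br /\ (forall x, br x x = 0) /\
  (forall x y z, br x (br y z) + br y (br z x) + br z (br x y) = 0).

Definition is_TP (br : V -> V -> V) : Prop :=
  is_Lie br /\
  (forall x y z, 2%:R *: mu z (br x y) = br (mu z x) y + br x (mu z y)).

Definition TP_iso (br1 br2 : V -> V -> V) : Prop :=
  exists f : V -> V,
    (forall (a : C) x y, f (a *: x + y) = a *: f x + f y) /\ bijective f /\
    (forall x y, f (mu x y) = mu (f x) (f y)) /\
    (forall x y, f (br1 x y) = br2 (f x) (f y)).
End Defs.

(* A bilinear alternating bracket on mu_0^3 is determined by p = [e1,e2],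
   q = [e1,e3] and r = [e2,e3].  Three instances of the transposed Poisson
   identity give q = 2 e1.p, r = 2 e1.q = 4 e1.e1.p and r = -2 e2.p; since
   e1.e1.p = e2.p = x1(p) e3, this forces 6 x1(p) = 0, and then the bracket is
   TP(x2 p, x3 p).  An automorphism of mu_0^3 is determined by the image u of
   e1, which must satisfy x1(u) <> 0; taking u = a e1 + (a b / 2) e2 maps
   TP(a, b) onto TP(1, 0) when a <> 0.  Conversely an isomorphism sends e2, e3
   to u^2, u^3, so it cannot carry [e1,e2] = e2 into the line of e3 where
   TP(0, al) lives, and comparing [e1,e2] for TP(0, al) and TP(0, be) gives
   al x1(u)^3 = be x1(u)^3. *)
From Pilot Require Import Defs.
From HB Require Import structures.
From mathcomp Require Import all_boot all_order all_algebra.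
From mathcomp Require Import complex.
From mathcomp Require Import reals.
From mathcomp Require Import ring.

Set Implicit Arguments.
Unset Strict Implicit.
Unset Printing Implicit Defensive.
Import Order.TTheory GRing.Theory Num.Theory.
Local Open Scope ring_scope.

Section Mu03.
Variable C : fieldType.
Notation V := 'rV[C]_3.
Local Notation e1 := (e1 C).
Local Notation e2 := (e2 C).
Local Notation e3 := (e3 C).

Lemma coD (u v : V) k (Hk : (k < 3)%N) : co (u + v) Hk = co u Hk + co v Hk.
Proof. by rewrite /co mxE. Qed.
Lemma coZ a (u : V) k (Hk : (k < 3)%N) : co (a *: u) Hk = a * co u Hk.
Proof. by rewrite /co mxE. Qed.
Lemma coN (u : V) k (Hk : (k < 3)%N) : co (- u) Hk = - co u Hk.
Proof. by rewrite /co mxE. Qed.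
Lemma co0 k (Hk : (k < 3)%N) : co (0 : V) Hk = 0.
Proof. by rewrite /co mxE. Qed.
Lemma co_e1 k (Hk : (k < 3)%N) : co e1 Hk = (k == 0)%:R.
Proof. by rewrite /co /Defs.e1 mxE. Qed.
Lemma co_e2 k (Hk : (k < 3)%N) : co e2 Hk = (k == 1)%:R.
Proof. by rewrite /co /Defs.e2 mxE. Qed.
Lemma co_e3 k (Hk : (k < 3)%N) : co e3 Hk = (k == 2)%:R.
Proof. by rewrite /co /Defs.e3 mxE. Qed.

Definition coE := (coD, coZ, coN, co0, co_e1, co_e2, co_e3).

Lemma coord_inj (u v : V) : x1 u = x1 v -> x2 u = x2 v -> x3 u = x3 v -> u = v.
Proof.
move=> h1 h2 h3; apply/matrixP => i j; rewrite (ord1 i).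
case: j => -[|[|[|k]]] Hk //.
- by move: h1; rewrite /x1 /co (bool_irrelevance Hk isT).
- by move: h2; rewrite /x2 /co (bool_irrelevance Hk isT).
- by move: h3; rewrite /x3 /co (bool_irrelevance Hk isT).
Qed.

Ltac coord_ring :=
  apply: coord_inj; rewrite /mu /TPbr /x1 /x2 /x3 ?coE /=; ring.

Lemma coord_decomp (x : V) : x = x1 x *: e1 + x2 x *: e2 + x3 x *: e3.
Proof. by coord_ring. Qed.

Lemma mu_e1e1 : mu e1 e1 = e2. Proof. by coord_ring. Qed.
Lemma mu_e1e2 : mu e1 e2 = e3. Proof. by coord_ring. Qed.
Lemma mu_e2e1 : mu e2 e1 = e3. Proof. by coord_ring. Qed.
Lemma mu_e2e2 : mu e2 e2 = 0. Proof. by coord_ring. Qed.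
Lemma mu_e1e3 : mu e1 e3 = 0. Proof. by coord_ring. Qed.

Lemma mu_sq (u : V) : mu u u = x1 u ^+ 2 *: e2 + (2%:R * x1 u * x2 u) *: e3.
Proof. by coord_ring. Qed.

Lemma mu_cube (u : V) : mu u (mu u u) = x1 u ^+ 3 *: e3.
Proof. by coord_ring. Qed.

Lemma TPbr_is_TP (a2 a3 : C) : is_TP (TPbr a2 a3).
Proof. by do !split => *; coord_ring. Qed.

Section AlternatingBracket.
Variable br : V -> V -> V.
Hypothesis br_bilin : is_bilinear br.
Hypothesis br_alt : forall x, br x x = 0.

Lemma br0l y : br 0 y = 0.
Proof.
have := br_bilin.1 1 0 0 y; rewrite scaler0 addr0 scale1r => /eqP.
by rewrite -subr_eq subrr eq_sym => /eqP.
Qed.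

Lemma br0r y : br y 0 = 0.
Proof.
have := br_bilin.2 1 0 0 y; rewrite scaler0 addr0 scale1r => /eqP.
by rewrite -subr_eq subrr eq_sym => /eqP.
Qed.

Lemma brDl x y z : br (x + y) z = br x z + br y z.
Proof. by have := br_bilin.1 1 x y z; rewrite !scale1r. Qed.

Lemma brDr x y z : br z (x + y) = br z x + br z y.
Proof. by have := br_bilin.2 1 x y z; rewrite !scale1r. Qed.

Lemma brZl a x z : br (a *: x) z = a *: br x z.
Proof. by have := br_bilin.1 a x 0 z; rewrite !addr0 br0l addr0. Qed.

Lemma brZr a x z : br z (a *: x) = a *: br z x.
Proof. by have := br_bilin.2 a x 0 z; rewrite !addr0 br0r addr0. Qed.

Lemma brC x y : br y x = - br x y.
Proof.
have /eqP := br_alt (x + y); rewrite brDl !brDr !br_alt add0r addr0.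
by rewrite addrC addr_eq0 => /eqP.
Qed.

Lemma br_expand x y : br x y =
  (x1 x * x2 y - x2 x * x1 y) *: br e1 e2 + (x1 x * x3 y - x3 x * x1 y) *: br e1 e3
  + (x2 x * x3 y - x3 x * x2 y) *: br e2 e3.
Proof.
rewrite {1}(coord_decomp x) {1}(coord_decomp y).
rewrite !brDl !brDr !brZl !brZr !br_alt (brC e1 e2) (brC e1 e3) (brC e2 e3).
move: (br e1 e2) (br e1 e3) (br e2 e3) => p q r.
by coord_ring.
Qed.

End AlternatingBracket.

Lemma br_eq_on_basis (br br' : V -> V -> V) :
  is_Lie br -> is_Lie br' ->
  br e1 e2 = br' e1 e2 -> br e1 e3 = br' e1 e3 -> br e2 e3 = br' e2 e3 ->
  br =2 br'.
Proof.
move=> [bil [alt _]] [bil' [alt' _]] E12 E13 E23 x y.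
by rewrite (br_expand bil alt) (br_expand bil' alt') E12 E13 E23.
Qed.

Section TransposedPoissonBracket.
Variable br : V -> V -> V.
Hypothesis br_TP : is_TP br.

Let br_bilin : is_bilinear br. Proof. by case: br_TP => -[]. Qed.
Let br_alt : forall x, br x x = 0. Proof. by case: br_TP => -[_ []]. Qed.
Let TP_identity := br_TP.2.

Lemma TP_br_e1e3 : br e1 e3 = 2%:R *: mu e1 (br e1 e2).
Proof. by rewrite TP_identity mu_e1e1 mu_e1e2 br_alt add0r. Qed.

Lemma TP_br_e2e3 : br e2 e3 = 2%:R *: mu e1 (br e1 e3).
Proof. by rewrite TP_identity mu_e1e1 mu_e1e3 (br0r br_bilin) addr0. Qed.

Lemma TP_br_e2e3_opp : br e2 e3 = - (2%:R *: mu e2 (br e1 e2)).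
Proof.
by rewrite TP_identity mu_e2e1 mu_e2e2 (br0r br_bilin) addr0 (brC br_bilin br_alt).
Qed.

Lemma TP_x1_br_e1e2 : (2%:R : C) != 0 -> (3%:R : C) != 0 -> x1 (br e1 e2) = 0.
Proof.
move=> two_neq0 three_neq0.
have := etrans (esym TP_br_e2e3) TP_br_e2e3_opp; rewrite TP_br_e1e3.
move: (br e1 e2) => p /(congr1 (@x3 C)).
rewrite /mu /x1 /x2 /x3 !coE /= -/(x1 p) => /eqP; rewrite -subr_eq0.
set L := (X in X == 0); have -> : L = (2%:R * 3%:R) * x1 p by rewrite /L; ring.
by rewrite !mulf_eq0 (negbTE two_neq0) (negbTE three_neq0) => /eqP.
Qed.

Lemma TP_br_eq_TPbr : (2%:R : C) != 0 -> (3%:R : C) != 0 ->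
  br =2 TPbr (x2 (br e1 e2)) (x3 (br e1 e2)).
Proof.
move=> two_neq0 three_neq0.
have p1_eq0 := TP_x1_br_e1e2 two_neq0 three_neq0.
have TP := TPbr_is_TP (x2 (br e1 e2)) (x3 (br e1 e2)).
apply: br_eq_on_basis br_TP.1 TP.1 _ _ _; rewrite ?TP_br_e2e3 ?TP_br_e1e3;
  move: (br e1 e2) p1_eq0 => p p1_eq0; apply: coord_inj;
  by rewrite /mu /TPbr /x1 /x2 /x3 !coE /= -/(x1 p) ?p1_eq0; ring.
Qed.

End TransposedPoissonBracket.

Lemma TP_iso_refl (br : V -> V -> V) : TP_iso br br.
Proof. by exists id; split; [|split; [exists id|]]. Qed.

Lemma TP_iso_eql (br br' br2 : V -> V -> V) :
  br =2 br' -> TP_iso br' br2 -> TP_iso br br2.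
Proof.
move=> E [f [lin [bij [mul brf]]]].
by exists f; split; [|split; [|split]] => // x y; rewrite E brf.
Qed.

(* e1 |-> u, hence e2 = e1^2 |-> u^2 and e3 = e1^3 |-> u^3. *)
Definition mu_auto (u x : V) : V :=
  x1 x *: u + x2 x *: mu u u + x3 x *: mu u (mu u u).

(* Triangular solve of mu_auto u y = x for y. *)
Definition mu_auto_inv (u x : V) : V :=
  let y1 := x1 x / x1 u in
  let y2 := (x2 x - x2 u * y1) / x1 u ^+ 2 in
  let y3 := (x3 x - x3 u * y1 - 2%:R * x1 u * x2 u * y2) / x1 u ^+ 3 in
  y1 *: e1 + y2 *: e2 + y3 *: e3.

Lemma mu_auto_linear (u : V) a x y :
  mu_auto u (a *: x + y) = a *: mu_auto u x + mu_auto u y.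
Proof. by rewrite /mu_auto mu_cube mu_sq; coord_ring. Qed.

Lemma mu_auto_mul (u x y : V) : mu_auto u (mu x y) = mu (mu_auto u x) (mu_auto u y).
Proof. by rewrite /mu_auto mu_cube mu_sq; coord_ring. Qed.

Lemma mu_auto_bij (u : V) : x1 u != 0 -> bijective (mu_auto u).
Proof.
move=> u1_neq0; rewrite /x1 in u1_neq0.
exists (mu_auto_inv u) => x; apply: coord_inj;
  rewrite /mu_auto_inv /mu_auto mu_cube mu_sq /mu /x1 /x2 /x3 !coE /=;
  by field; rewrite ?expf_neq0.
Qed.

Lemma TPbr_iso_TPbr10 (a b : C) : (2%:R : C) != 0 -> a != 0 ->
  TP_iso (TPbr a b) (TPbr 1 0).
Proof.
move=> two_neq0 a_neq0; pose u := a *: e1 + (a * b / 2%:R) *: e2.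
have u1 : x1 u = a by rewrite /u /x1 !coE /=; ring.
exists (mu_auto u); split; [|split; [|split]].
- exact: mu_auto_linear.
- by apply: mu_auto_bij; rewrite u1.
- exact: mu_auto_mul.
- move=> x y; apply: coord_inj;
    by rewrite /mu_auto mu_cube mu_sq /u /mu /TPbr /x1 /x2 /x3 !coE /=; field.
Qed.

Section Isomorphisms.
Variable f : V -> V.
Hypothesis f_linear : forall (a : C) x y, f (a *: x + y) = a *: f x + f y.
Hypothesis f_bij : bijective f.
Hypothesis f_mul : forall x y, f (mu x y) = mu (f x) (f y).

Lemma iso_0 : f 0 = 0.
Proof.
have := f_linear 1 0 0; rewrite scaler0 addr0 scale1r => /eqP.
by rewrite -subr_eq subrr eq_sym => /eqP.
Qed.

Lemma iso_e2 : f e2 = mu (f e1) (f e1).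
Proof. by rewrite -mu_e1e1 f_mul. Qed.

Lemma iso_e3 : f e3 = x1 (f e1) ^+ 3 *: e3.
Proof. by rewrite -{1}mu_e1e2 f_mul iso_e2 mu_cube. Qed.

Lemma iso_x1_e1_neq0 : x1 (f e1) != 0.
Proof.
apply/negP => /eqP a_eq0.
have /(bij_inj f_bij) : f e3 = f 0 by rewrite iso_e3 a_eq0 expr0n scale0r iso_0.
move/(congr1 (@x3 C)); rewrite /x3 !coE /=.
by move/eqP; rewrite oner_eq0.
Qed.

End Isomorphisms.

Lemma x1_mu (u v : V) : x1 (mu u v) = 0.
Proof. by rewrite /mu /x1 !coE /=; ring. Qed.

Lemma x2_mu (u v : V) : x2 (mu u v) = x1 u * x1 v.
Proof. by rewrite /mu /x2 !coE /=; ring. Qed.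

Lemma x2_TPbr0 (al : C) x y : x2 (TPbr 0 al x y) = 0.
Proof. by rewrite /TPbr /x2 !coE /=; ring. Qed.

Lemma x3_TPbr0 (al : C) x y :
  x3 (TPbr 0 al x y) = al * (x1 x * x2 y - x2 x * x1 y).
Proof. by rewrite /TPbr /x1 /x2 /x3 !coE /=; ring. Qed.

Lemma TPbr10_not_iso_TPbr0 (al : C) : ~ TP_iso (TPbr 1 0) (TPbr 0 al).
Proof.
move=> [f [lin [bij [mul brf]]]].
have a_neq0 := iso_x1_e1_neq0 lin bij mul.
have : x1 (f e1) ^+ 2 = 0.
  rewrite expr2 -x2_mu -(iso_e2 mul).
  have -> : e2 = TPbr 1 0 e1 e2 by coord_ring.
  by rewrite brf x2_TPbr0.
by move/eqP; rewrite expf_eq0 (negbTE a_neq0) andbF.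
Qed.

Lemma TPbr0_iso_eq (al be : C) : TP_iso (TPbr 0 al) (TPbr 0 be) -> al = be.
Proof.
move=> [f [lin [bij [mul brf]]]].
have a3_neq0 := expf_neq0 3 (iso_x1_e1_neq0 lin bij mul).
apply: (mulIf a3_neq0).
have := congr1 (@x3 C) (brf e1 e2).
have -> : TPbr 0 al e1 e2 = al *: e3 + 0 by coord_ring.
rewrite lin (iso_0 lin) addr0 (iso_e3 mul) x3_TPbr0 (iso_e2 mul) x1_mu x2_mu.
rewrite /x3 !coE /= => E.
by apply: etrans (etrans _ E) _; ring.
Qed.

End Mu03.

Theorem mainTheorem3 (R : realType) :
  (* the listed algebras are transposed Poisson structures on mu_0^3 *)
  (is_TP (TPbr (1 : R[i]) 0) /\ forall al : R[i], is_TP (TPbr 0 al)) /\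
  (* every transposed Poisson structure is isomorphic to one of them *)
  (forall br : 'rV[R[i]]_3 -> 'rV[R[i]]_3 -> 'rV[R[i]]_3, is_TP br ->
     TP_iso br (TPbr 1 0) \/ exists al : R[i], TP_iso br (TPbr 0 al)) /\
  (* and they are pairwise non-isomorphic *)
  (forall al : R[i], ~ TP_iso (TPbr 1 0) (TPbr 0 al)) /\
  (forall al be : R[i], TP_iso (TPbr 0 al) (TPbr 0 be) -> al = be).
Proof.
have two_neq0 : (2%:R : R[i]) != 0 by rewrite pnatr_eq0.
have three_neq0 : (3%:R : R[i]) != 0 by rewrite pnatr_eq0.
split; first by split => [|al]; apply: TPbr_is_TP.
split; last by split; [apply: TPbr10_not_iso_TPbr0 | apply: TPbr0_iso_eq].
move=> br br_TP; have E := TP_br_eq_TPbr br_TP two_neq0 three_neq0.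
have [a2_eq0 | a2_neq0] := eqVneq (x2 (br (e1 _) (e2 _))) 0.
- by right; exists (x3 (br (e1 _) (e2 _))); rewrite a2_eq0 in E;
    apply: TP_iso_eql E (TP_iso_refl _).
- by left; apply: TP_iso_eql E (TPbr_iso_TPbr10 _ two_neq0 a2_neq0).
Qed.
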